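(* Let $G$ be a classical subgroup of $\mathrm{GL}(N+1,\mathbb{C})$ (for instance $G=\mathrm{SL}(N+1,\mathbb{C})$), let $V$ and $W$ be finite-dimensional rational complex representations of $G$ equipped with Hermitian norms $\|\cdot\|$, and let $v\in V\setminus\{0\}$, $w\in W\setminus\{0\}$. Define $p_{v,w}(\sigma)=\log\|\sigma(w)\|^2-\log\|\sigma(v)\|^2$ for $\sigma\in G$. Then $$\inf_{\sigma\in G}p_{v,w}(\sigma)=\log\tan^2 d\big(\overline{G[v,w]},\,\overline{G[v,0]}\big),$$ where $d$ is the distance function of the Fubini–Study metric on $\mathbb{P}(V\oplus W)$ and $d(A,B)$ denotes the distance between the sets $A$ and $B$.
   Context: The Hermitian norms on $V$ and $W$ induce a Hermitian inner product $(\cdot,\cdot)$ on $V\oplus W$ (orthogonal direct sum), and the Fubini–Study distance on $\mathbb{P}(V\oplus W)$ is given by $\cos d([u],[u'])=|(u,u')|/(\|u\|\,\|u'\|)$. Here $[v,w]$ denotes the point of $\mathbb{P}(V\oplus W)$ determined by $(v,w)$, $[v,0]$ the point determined by $(v,0)$, and $\overline{G[v,w]}$, $\overline{G[v,0]}$ are the closures of their $G$-orbits in $\mathbb{P}(V\oplus W)$. *)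

From HB Require Import structures.
From mathcomp Require Import all_boot all_order all_algebra.
From mathcomp Require Import all_classical all_reals all_analysis.
From mathcomp Require Export complex.
Set Implicit Arguments. Unset Strict Implicit. Unset Printing Implicit Defensive.
Import Order.TTheory GRing.Theory Num.Theory.
Local Open Scope ring_scope.
Local Open Scope classical_set_scope.

Section Defs.
Variable R : realType.
Local Notation C := R[i].

Definition cconj (z : C) : C := Num.conj z.
Definition cabs (z : C) : R := complex.Re `|z|.

Definition symp_form (m : nat) : 'M[C]_(m + m) :=
  block_mx 0 1%:M (- 1%:M) 0.

Inductive classical_group (n : nat) : set 'M[C]_n -> Prop :=
| classical_GL : classical_group [set A | A \in unitmx]
| classical_SL : classical_group [set A | \det A = 1]
| classical_O  : classical_group [set A | A^T *m A = 1%:M]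
| classical_SO : classical_group [set A | A^T *m A = 1%:M /\ \det A = 1]
| classical_Sp (m : nat) (e : m + m = n) :
    classical_group
      [set A | A^T *m castmx (e, e) (symp_form m) *m A = castmx (e, e) (symp_form m)].

(** A function G -> C is regular (a "rational" function on G) when it is the
    restriction to G of a polynomial in the matrix entries and 1/det. *)
Definition regular_fun (n : nat) (G : set 'M[C]_n) (f : 'M[C]_n -> C) : Prop :=
  exists (K k : nat) (c : 'I_K -> C) (e : 'I_K -> 'I_n -> 'I_n -> nat),
    forall A, G A ->
      f A = (\det A) ^- k * \sum_(l < K) c l * \prod_(i < n) \prod_(j < n) A i j ^+ e l i j.

(** A finite-dimensional rational representation of G on C^d
    (vectors as column vectors): a group homomorphism with regular entries. *)
Definition rational_rep (n d : nat) (G : set 'M[C]_n) (rho : 'M[C]_n -> 'M[C]_d) : Prop :=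
  [/\ rho 1%:M = 1%:M,
      (forall A B, G A -> G B -> rho (A *m B) = rho A *m rho B) &
      forall i j, regular_fun G (fun A => rho A i j)].

(** Hermitian inner product on C^d given by a Hermitian positive definite
    matrix H: (u, u')_H = u'^* H u.  Every Hermitian norm arises this way. *)
Definition herm_ip (d : nat) (H : 'M[C]_d) (u u' : 'cV[C]_d) : C :=
  ((map_mx cconj u')^T *m H *m u) 0 0.

Definition hermitian_pd (d : nat) (H : 'M[C]_d) : Prop :=
  (map_mx cconj H)^T = H /\ forall u : 'cV[C]_d, u != 0 -> 0 < herm_ip H u u.

Definition herm_norm (d : nat) (H : 'M[C]_d) (u : 'cV[C]_d) : R :=
  Num.sqrt (complex.Re (herm_ip H u u)).

(** The orthogonal direct sum V (+) W, with V = C^a, W = C^b. *)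
Definition sum_ip (a b : nat) (HV : 'M[C]_a) (HW : 'M[C]_b)
  (x y : 'cV[C]_a * 'cV[C]_b) : C :=
  herm_ip HV x.1 y.1 + herm_ip HW x.2 y.2.

Definition sum_norm (a b : nat) (HV : 'M[C]_a) (HW : 'M[C]_b)
  (x : 'cV[C]_a * 'cV[C]_b) : R :=
  Num.sqrt (complex.Re (sum_ip HV HW x x)).

Definition fs_dist (a b : nat) (HV : 'M[C]_a) (HW : 'M[C]_b)
  (x y : 'cV[C]_a * 'cV[C]_b) : R :=
  acos (cabs (sum_ip HV HW x y) / (sum_norm HV HW x * sum_norm HV HW y)).

(** Points of P(V (+) W) are represented by nonzero vectors; a subset of
    P(V (+) W) is represented by a set of nonzero vectors (all of whose
    representatives are irrelevant since fs_dist is scale invariant). *)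
Definition nonzero_vec (a b : nat) (x : 'cV[C]_a * 'cV[C]_b) : Prop :=
  x.1 != 0 \/ x.2 != 0.

(** Closure in P(V (+) W) (w.r.t. the Fubini--Study metric, which induces the
    usual topology of projective space). *)
Definition fs_closure (a b : nat) (HV : 'M[C]_a) (HW : 'M[C]_b)
  (A : set ('cV[C]_a * 'cV[C]_b)) : set ('cV[C]_a * 'cV[C]_b) :=
  [set x | nonzero_vec x /\
     forall eps : R, 0 < eps -> exists2 y, A y & fs_dist HV HW x y < eps].

Definition fs_set_dist (a b : nat) (HV : 'M[C]_a) (HW : 'M[C]_b)
  (A B : set ('cV[C]_a * 'cV[C]_b)) : R :=
  inf [set fs_dist HV HW x y | x in A & y in B].

Definition orbit_pt (n a b : nat) (G : set 'M[C]_n)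
  (rhoV : 'M[C]_n -> 'M[C]_a) (rhoW : 'M[C]_n -> 'M[C]_b)
  (v : 'cV[C]_a) (w : 'cV[C]_b) : set ('cV[C]_a * 'cV[C]_b) :=
  [set (rhoV s *m v, rhoW s *m w) | s in G].

Definition elog (x : R) : \bar R := if 0 < x then (ln x)%:E else -oo%E.

Definition p_vw (n a b : nat) (HV : 'M[C]_a) (HW : 'M[C]_b)
  (rhoV : 'M[C]_n -> 'M[C]_a) (rhoW : 'M[C]_n -> 'M[C]_b)
  (v : 'cV[C]_a) (w : 'cV[C]_b) (s : 'M[C]_n) : R :=
  ln (herm_norm HW (rhoW s *m w) ^+ 2) - ln (herm_norm HV (rhoV s *m v) ^+ 2).

End Defs.

From HB Require Import structures.
From mathcomp Require Import all_boot all_order all_algebra.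
From mathcomp Require Import all_classical all_reals all_analysis.
From mathcomp Require Import complex.
From mathcomp Require Import ring lra.
Import Order.TTheory GRing.Theory Num.Theory.
Local Open Scope ring_scope.
Local Open Scope classical_set_scope.
Set Implicit Arguments. Unset Strict Implicit.

(* Let theta([x]) in [0, pi] be the Fubini--Study distance from [x] = [x_1, x_2]
   to P(V), so that cos theta = ||x_1|| / ||x|| and sin theta = ||x_2|| / ||x||.
   Cauchy--Schwarz in V and in W gives cos d([x], [y]) <= cos (theta x - theta y),
   i.e. theta is 1-Lipschitz; hence bounds on theta pass to orbit closures.  On
   the orbit of [v, w] we have tan theta = ||s w|| / ||s v||, so theta >= atan (sqrt m)
   with m the infimum of ||s w||^2 / ||s v||^2, while theta vanishes on the orbit
   of [v, 0]; thus all distances between the two closures are >= atan (sqrt m).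
   Conversely d(s[v, w], s[v, 0]) = theta(s[v, w]) = atan (||s w|| / ||s v||), so
   the distance between the closures is atan (sqrt m) and inf p_{v,w} = log m. *)

Section Complex.
Variable R : realType.
Local Notation C := R[i].
Local Open Scope complex_scope.

Lemma real_complexD (x y : R) : (x + y)%:C = x%:C + y%:C :> C.
Proof. exact: rmorphD. Qed.

Lemma real_complexM (x y : R) : (x * y)%:C = x%:C * y%:C :> C.
Proof. exact: rmorphM. Qed.

Lemma normc_cabs (z : C) : `|z| = (cabs z)%:C.
Proof. by rewrite /cabs normc_def. Qed.

Lemma cabs_ge0 (z : C) : 0 <= cabs z.
Proof. by rewrite /cabs normc_def /= sqrtr_ge0. Qed.

Lemma cabs_real (x : R) : cabs x%:C = `|x|.
Proof. by rewrite /cabs normc_def /= expr0n /= addr0 sqrtr_sqr. Qed.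

Lemma cabsD (z1 z2 : C) : cabs (z1 + z2) <= cabs z1 + cabs z2.
Proof. by have := ler_normD z1 z2; rewrite !normc_cabs -real_complexD lecR. Qed.

Lemma map_mx_cconjM m n p (A : 'M[C]_(m, n)) (B : 'M[C]_(n, p)) :
  map_mx (@cconj R) (A *m B) = map_mx (@cconj R) A *m map_mx (@cconj R) B.
Proof.
apply/matrixP => i j; rewrite !mxE /cconj rmorph_sum; apply: eq_bigr => k _.
by rewrite !mxE rmorphM.
Qed.

Lemma herm_ipDl d (H : 'M[C]_d) u1 u2 u' :
  herm_ip H (u1 + u2) u' = herm_ip H u1 u' + herm_ip H u2 u'.
Proof. by rewrite /herm_ip mulmxDr mxE. Qed.

Lemma herm_ipZl d (H : 'M[C]_d) c u u' :
  herm_ip H (c *: u) u' = c * herm_ip H u u'.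
Proof. by rewrite /herm_ip -scalemxAr mxE. Qed.

Lemma herm_ip0l d (H : 'M[C]_d) u' : herm_ip H 0 u' = 0.
Proof. by rewrite /herm_ip mulmx0 mxE. Qed.

Lemma herm_norm0 d (H : 'M[C]_d) : herm_norm H 0 = 0.
Proof. by rewrite /herm_norm herm_ip0l /= sqrtr0. Qed.

Lemma herm_norm_ge0 d (H : 'M[C]_d) u : 0 <= herm_norm H u.
Proof. exact: sqrtr_ge0. Qed.

Section Hermitian.
Variables (d : nat) (H : 'M[C]_d).
Hypothesis H_pd : hermitian_pd H.

Lemma herm_ipC u u' : herm_ip H u' u = cconj (herm_ip H u u').
Proof.
rewrite /herm_ip; set M := (_ *m H *m u).
have -> : cconj (M 0 0) = (map_mx (@cconj R) M) 0 0 by rewrite [RHS]mxE.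
rewrite /M !map_mx_cconjM.
have -> : map_mx (@cconj R) (map_mx (@cconj R) u')^T = u'^T.
  by apply/matrixP => i j; rewrite !mxE /cconj conjCK.
have tr11 (N : 'M[C]_1) : N 0 0 = N^T 0 0 by rewrite mxE.
by rewrite [RHS]tr11 !trmx_mul trmxK H_pd.1 mulmxA.
Qed.

Lemma herm_ip0r u : herm_ip H u 0 = 0.
Proof. by rewrite herm_ipC herm_ip0l /cconj rmorph0. Qed.

Lemma herm_ipDr u u1 u2 :
  herm_ip H u (u1 + u2) = herm_ip H u u1 + herm_ip H u u2.
Proof. by rewrite herm_ipC herm_ipDl (herm_ipC u1) (herm_ipC u2) /cconj rmorphD. Qed.

Lemma herm_ipZr c u u' : herm_ip H u (c *: u') = cconj c * herm_ip H u u'.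
Proof. by rewrite herm_ipC herm_ipZl (herm_ipC u') /cconj rmorphM. Qed.

Lemma herm_ipxx u : herm_ip H u u = (herm_norm H u ^+ 2)%:C.
Proof.
have : 0 <= herm_ip H u u.
  by have [->|/H_pd.2/ltW //] := eqVneq u 0; rewrite herm_ip0l.
rewrite /herm_norm; case: (herm_ip H u u) => x y.
by rewrite lecE /= => /andP[/eqP -> /sqr_sqrtr ->].
Qed.

Lemma herm_norm_gt0 u : u != 0 -> 0 < herm_norm H u.
Proof.
move=> /H_pd.2; rewrite herm_ipxx ltcR exprn_even_gt0 //= => N_neq0.
by rewrite lt_def N_neq0 herm_norm_ge0.
Qed.

Lemma herm_CauchySchwarz u u' :
  cabs (herm_ip H u u') <= herm_norm H u * herm_norm H u'.
Proof.
have [->|u'_neq0] := eqVneq u' 0.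
  by rewrite herm_ip0r -[0]/(0%:C) cabs_real normr0 mulr_ge0 ?herm_norm_ge0.
set g := herm_ip H u u'; set A := herm_norm H u; set B := herm_norm H u'.
have B_gt0 : 0 < B by exact: herm_norm_gt0.
have BC_neq0 : B%:C != 0 by rewrite eq_complex /= eqxx andbT gt_eqF.
(* expand 0 <= (u - l u', u - l u') with l = (u, u') / ||u'||^2 *)
have := herm_ipxx (u + (- (g / (B ^+ 2)%:C)) *: u').
rewrite herm_ipDl !herm_ipDr !herm_ipZl !herm_ipZr (herm_ipC u u') -/g.
rewrite !herm_ipxx -/A -/B (_ : cconj (- _) = - cconj g / (B ^+ 2)%:C); last first.
  by rewrite /cconj rmorphN rmorphM fmorphV mulNr; congr (- (_ * _^-1)); exact: conjc_real.
move=> Enorm.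
have : 0 <= (A ^+ 2)%:C - g * cconj g / (B ^+ 2)%:C.
  rewrite (_ : _ - _ = (herm_norm H (u + (- (g / (B ^+ 2)%:C)) *: u') ^+ 2)%:C).
    by rewrite lecR sqr_ge0.
  by rewrite -Enorm !rmorphXn; field.
have -> : g * cconj g = (cabs g ^+ 2)%:C.
  by rewrite /cconj -normCK normc_cabs expr2 real_complexM.
rewrite subr_ge0 ler_pdivrMr ?ltcR ?exprn_gt0 // -real_complexM lecR -exprMn.
by rewrite ler_pXn2r // nnegrE ?cabs_ge0 // mulr_ge0 ?herm_norm_ge0.
Qed.
End Hermitian.
End Complex.

Lemma acos_nonincr (R : realType) (x y : R) :
  -1 <= x <= 1 -> -1 <= y <= 1 -> x <= y -> acos y <= acos x.
Proof.
move=> x_itv y_itv le_xy; rewrite leNgt; apply/negP => lt_acos.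
have : cos (acos y) < cos (acos x).
  by rewrite ltr_cos // in_itv /= ?acos_ge0 ?acos_lepi.
by rewrite !acosK ?in_itv // ltNge le_xy.
Qed.

Section FubiniStudy.
Variables (R : realType) (a b : nat) (HV : 'M[R[i]]_a) (HW : 'M[R[i]]_b).
Hypotheses (HV_pd : hermitian_pd HV) (HW_pd : hermitian_pd HW).
Local Open Scope complex_scope.

Lemma sum_normE x :
  sum_norm HV HW x = Num.sqrt (herm_norm HV x.1 ^+ 2 + herm_norm HW x.2 ^+ 2).
Proof. by rewrite /sum_norm /sum_ip !herm_ipxx // -real_complexD. Qed.

Lemma sqr_sum_norm x :
  sum_norm HV HW x ^+ 2 = herm_norm HV x.1 ^+ 2 + herm_norm HW x.2 ^+ 2.
Proof. by rewrite sum_normE sqr_sqrtr ?addr_ge0 ?sqr_ge0. Qed.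

Lemma sum_norm_ge0 x : 0 <= sum_norm HV HW x.
Proof. exact: sqrtr_ge0. Qed.

Lemma sum_norm_gt0 x : nonzero_vec x -> 0 < sum_norm HV HW x.
Proof.
rewrite sum_normE sqrtr_gt0.
case=> [/(herm_norm_gt0 HV_pd) | /(herm_norm_gt0 HW_pd)] /(exprn_gt0 2) n_gt0.
- by rewrite ltr_pwDl ?sqr_ge0.
- by rewrite ltr_pwDr ?sqr_ge0.
Qed.

Lemma sum_ipxx x : sum_ip HV HW x x = (sum_norm HV HW x ^+ 2)%:C.
Proof. by rewrite sqr_sum_norm /sum_ip !herm_ipxx // -real_complexD. Qed.

Lemma cabs_sum_ip_le x y :
  cabs (sum_ip HV HW x y) <=
  herm_norm HV x.1 * herm_norm HV y.1 + herm_norm HW x.2 * herm_norm HW y.2.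
Proof.
exact: le_trans (cabsD _ _)
  (lerD (herm_CauchySchwarz _ _ _) (herm_CauchySchwarz _ _ _)).
Qed.

Lemma fs_dist_refl x : nonzero_vec x -> fs_dist HV HW x x = 0.
Proof.
move=> /sum_norm_gt0 S_gt0.
rewrite /fs_dist sum_ipxx cabs_real ger0_norm ?sqr_ge0 // expr2 divff ?acos1 //.
by apply: mulf_neq0; rewrite gt_eqF.
Qed.

Lemma subset_fs_closure (A : set ('cV[R[i]]_a * 'cV[R[i]]_b)) :
  (forall x, A x -> nonzero_vec x) -> A `<=` fs_closure HV HW A.
Proof.
move=> A_nz x Ax; split=> [|eps eps_gt0]; first exact: A_nz.
by exists x => //; rewrite fs_dist_refl //; exact: A_nz.
Qed.

(* The Fubini--Study distance from [x] to P(V). *)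
Definition fs_angle x := acos (herm_norm HV x.1 / sum_norm HV HW x).

Lemma fs_angle_cos_itv x : -1 <= herm_norm HV x.1 / sum_norm HV HW x <= 1.
Proof.
have c_ge0 : 0 <= herm_norm HV x.1 / sum_norm HV HW x.
  by rewrite divr_ge0 ?herm_norm_ge0 ?sum_norm_ge0.
rewrite (le_trans _ c_ge0) ?lerN10 //=.
have [->|S_neq0] := eqVneq (sum_norm HV HW x) 0; first by rewrite invr0 mulr0.
rewrite ler_pdivrMr ?mul1r; last by rewrite lt_def S_neq0 sum_norm_ge0.
rewrite -[X in X <= _](ger0_norm (herm_norm_ge0 HV x.1)) -sqrtr_sqr sum_normE.
by rewrite ler_sqrt ?addr_ge0 ?sqr_ge0 // lerDl sqr_ge0.
Qed.

Lemma fs_angle_itv x : 0 <= fs_angle x <= pi.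
Proof. by rewrite acos_ge0 ?acos_lepi ?fs_angle_cos_itv. Qed.

Lemma cos_fs_angle x : cos (fs_angle x) = herm_norm HV x.1 / sum_norm HV HW x.
Proof. by rewrite acosK // in_itv fs_angle_cos_itv. Qed.

Lemma sin_fs_angle x :
  nonzero_vec x -> sin (fs_angle x) = herm_norm HW x.2 / sum_norm HV HW x.
Proof.
move=> /sum_norm_gt0 S_gt0; rewrite sin_acos ?fs_angle_cos_itv //.
have b_S_ge0 : 0 <= herm_norm HW x.2 / sum_norm HV HW x.
  by rewrite divr_ge0 ?herm_norm_ge0 ?sum_norm_ge0.
rewrite -(ger0_norm b_S_ge0) -sqrtr_sqr; congr Num.sqrt.
by rewrite !expr_div_n sqr_sum_norm; field; rewrite -sqr_sum_norm sqrf_eq0 gt_eqF.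
Qed.

Lemma fs_angle_lipschitz x y : nonzero_vec x -> nonzero_vec y ->
  `|fs_angle x - fs_angle y| <= fs_dist HV HW x y.
Proof.
move=> x_nz y_nz; have Sx_gt0 := sum_norm_gt0 x_nz; have Sy_gt0 := sum_norm_gt0 y_nz.
set t := fs_angle x - fs_angle y.
have cos_t : cos t =
    (herm_norm HV x.1 * herm_norm HV y.1 + herm_norm HW x.2 * herm_norm HW y.2)
    / (sum_norm HV HW x * sum_norm HV HW y).
  by rewrite cosB !cos_fs_angle !sin_fs_angle //; field; rewrite !gt_eqF.
have fs_cos_le :
    cabs (sum_ip HV HW x y) / (sum_norm HV HW x * sum_norm HV HW y) <= cos t.
  by rewrite cos_t ler_wpM2r ?invr_ge0 ?mulr_ge0 ?sum_norm_ge0 ?cabs_sum_ip_le.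
have fs_cos_ge0 :
    0 <= cabs (sum_ip HV HW x y) / (sum_norm HV HW x * sum_norm HV HW y).
  by rewrite divr_ge0 ?cabs_ge0 ?mulr_ge0 ?sum_norm_ge0.
have cos_abs_t : cos `|t| = cos t.
  by have [t_ge0|t_lt0] := leP 0 t; [rewrite ger0_norm | rewrite ltr0_norm ?cosN].
have abs_t_itv : 0 <= `|t| <= pi.
  move: (fs_angle_itv x) (fs_angle_itv y) => /andP[? ?] /andP[? ?].
  by rewrite normr_ge0 ler_norml /t; apply/andP; split; lra.
rewrite -[`|t|]cosK ?in_itv // cos_abs_t; apply: acos_nonincr => //.
- by rewrite (le_trans _ fs_cos_ge0) ?lerN10 // (le_trans fs_cos_le) ?cos_le1.
- by rewrite cos_geN1 cos_le1.
Qed.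

Lemma fs_angle_closure_ge (A : set ('cV[R[i]]_a * 'cV[R[i]]_b)) c x :
  (forall y, A y -> nonzero_vec y /\ c <= fs_angle y) ->
  fs_closure HV HW A x -> c <= fs_angle x.
Proof.
move=> A_ge [x_nz x_adh]; apply/ler_addgt0Pr => e e_gt0.
have [y /A_ge[y_nz c_le] d_lt] := x_adh e e_gt0.
have := fs_angle_lipschitz x_nz y_nz; rewrite ler_norml => /andP[? ?]; lra.
Qed.

Lemma fs_angle_closure_le (A : set ('cV[R[i]]_a * 'cV[R[i]]_b)) c x :
  (forall y, A y -> nonzero_vec y /\ fs_angle y <= c) ->
  fs_closure HV HW A x -> fs_angle x <= c.
Proof.
move=> A_le [x_nz x_adh]; apply/ler_addgt0Pr => e e_gt0.
have [y /A_le[y_nz le_c] d_lt] := x_adh e e_gt0.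
have := fs_angle_lipschitz x_nz y_nz; rewrite ler_norml => /andP[? ?]; lra.
Qed.

Lemma fs_dist_pr1 x : x.1 != 0 -> fs_dist HV HW x (x.1, 0) = fs_angle x.
Proof.
move=> x1_nz; have a_gt0 := herm_norm_gt0 HV_pd x1_nz.
have S_gt0 := sum_norm_gt0 (or_introl x1_nz).
rewrite /fs_dist /fs_angle /sum_ip /= herm_ip0r // addr0 herm_ipxx //.
rewrite cabs_real ger0_norm ?sqr_ge0 // [sum_norm _ _ (_, 0)]sum_normE /= herm_norm0.
rewrite expr0n addr0 sqrtr_sqr ger0_norm ?herm_norm_ge0 //.
by congr acos; field; rewrite !gt_eqF.
Qed.

Lemma fs_angle_pr1 u : u != 0 -> fs_angle (u, 0) = 0.
Proof. by move=> u_nz; rewrite -fs_dist_pr1 //= fs_dist_refl //; left. Qed.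

Lemma fs_angle_atan x :
  x.1 != 0 -> fs_angle x = atan (herm_norm HW x.2 / herm_norm HV x.1).
Proof.
move=> x1_nz; have a_gt0 := herm_norm_gt0 HV_pd x1_nz.
have S_gt0 := sum_norm_gt0 (or_introl x1_nz).
have atan_ge0 : 0 <= atan (herm_norm HW x.2 / herm_norm HV x.1).
  by rewrite -atan0 le_atan // divr_ge0 ?herm_norm_ge0.
rewrite -[RHS]cosK ?in_itv /= ?atan_ge0; last first.
  by rewrite (le_trans (ltW (atan_ltpi2 _))) // ler_pdivrMr // ler_pMr ?pi_gt0 ?ler1n.
rewrite cos_atan (_ : 1 + _ = (sum_norm HV HW x / herm_norm HV x.1) ^+ 2).
  by rewrite sqrtr_sqr ger0_norm ?invf_div // divr_ge0 ?sum_norm_ge0 ?herm_norm_ge0.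
by rewrite !expr_div_n sqr_sum_norm; field; rewrite gt_eqF.
Qed.

End FubiniStudy.

Section ClassicalGroups.
Variable R : realType.
Local Notation C := R[i].

Lemma castmx_symp_form_sqr n m (e : m + m = n) :
  castmx (e, e) (symp_form R m) *m castmx (e, e) (symp_form R m) = - 1%:M.
Proof.
case: n / e; rewrite castmx_id /symp_form mulmx_block.
rewrite !mulmx0 !mul0mx !mulmx1 !mul1mx !add0r !addr0.
by rewrite (scalar_mx_block m m (1 : C)) opp_block_mx oppr0.
Qed.

Lemma classical_group1 n (G : set 'M[C]_n) : classical_group G -> G 1%:M.
Proof.
by case=> [|||| m e] /=; rewrite ?unitmx1 ?det1 ?trmx1 ?mulmx1 ?mul1mx.
Qed.

Lemma classical_group_linv n (G : set 'M[C]_n) s :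
  classical_group G -> G s -> exists2 s', G s' & s' *m s = 1%:M.
Proof.
case=> [|||| m e] /=.
- by move=> s_unit; exists (invmx s); rewrite ?mulVmx //= unitmx_inv.
- move=> det_s; have s_unit : s \in unitmx by rewrite unitmxE det_s unitr1.
  by exists (invmx s); rewrite ?mulVmx //= det_inv det_s invr1.
- by move=> s_orth; exists s^T; rewrite //= trmxK; apply: mulmx1C.
- move=> [s_orth det_s]; exists s^T; rewrite //= trmxK det_tr det_s.
  by split=> //; apply: mulmx1C.
- set J := castmx (e, e) (symp_form R m) => s_symp.
  have s_unit : s \in unitmx.
    suff /mulmx1_unit[] : (- (J *m s^T *m J)) *m s = 1%:M by [].
    by rewrite mulNmx -!mulmxA (mulmxA s^T) s_symp castmx_symp_form_sqr opprK.
  exists (invmx s); rewrite ?mulVmx //=.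
  rewrite -{1}s_symp !mulmxA -trmx_mul mulmxV // trmx1 mul1mx.
  by rewrite -mulmxA mulmxV // mulmx1.
Qed.

Lemma rational_rep_mx_neq0 n d (G : set 'M[C]_n) (rho : 'M[C]_n -> 'M[C]_d)
    (x : 'cV[C]_d) s :
  classical_group G -> rational_rep G rho -> G s -> x != 0 -> rho s *m x != 0.
Proof.
move=> G_classical [rho1 rhoM _] Gs; apply: contra_neq => rho_s_x.
have [s' Gs' s's] := classical_group_linv G_classical Gs.
by rewrite -[x]mul1mx -rho1 -s's rhoM // -mulmxA rho_s_x mulmx0.
Qed.

End ClassicalGroups.

Lemma ereal_inf_ln (R : realType) (S : set R) :
  S !=set0 -> (forall x, S x -> 0 < x) ->
  ereal_inf [set (ln x)%:E | x in S] = elog (inf S).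
Proof.
move=> S_nz S_gt0.
have S_lb : has_lbound S by exists 0 => x /S_gt0/ltW.
have inf_ge0 : 0 <= inf S by apply: lb_le_inf => // x /S_gt0/ltW.
have inf_ln_le t : inf S < expR t -> (ereal_inf [set (ln x)%:E | x in S] <= t%:E)%E.
  move=> /(inf_lt S_nz)[x Sx x_lt]; apply: le_trans (ereal_inf_lbound _) _.
    by exists x.
  by rewrite lee_fin -(expRK t) ler_ln ?posrE ?expR_gt0 ?S_gt0 // ltW.
rewrite /elog; case: ifPn => [inf_gt0 | inf_le0].
- apply/le_anti/andP; split.
  + apply/lee_addgt0Pr => e e_gt0; rewrite -EFinD; apply: inf_ln_le.
    by rewrite expRD lnK ?posrE // ltr_pMr // expR_gt1.
  + apply: le_ereal_inf_tmp => _ [x Sx <-].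
    by rewrite lee_fin ler_ln ?posrE ?inf_gt0 ?S_gt0 //; apply: ge_inf.
- apply: (@eq_ninfty R) => t; apply: inf_ln_le.
  have -> : inf S = 0 by apply/eqP; rewrite eq_le inf_ge0 andbT leNgt.
  exact: expR_gt0.
Qed.

Section OrbitClosures.
Variables (R : realType) (N a b : nat) (G : set 'M[R[i]]_N.+1).
Variables (rhoV : 'M[R[i]]_N.+1 -> 'M[R[i]]_a) (rhoW : 'M[R[i]]_N.+1 -> 'M[R[i]]_b).
Variables (HV : 'M[R[i]]_a) (HW : 'M[R[i]]_b) (v : 'cV[R[i]]_a) (w : 'cV[R[i]]_b).
Hypotheses (G_classical : classical_group G).
Hypotheses (rhoV_rep : rational_rep G rhoV) (rhoW_rep : rational_rep G rhoW).
Hypotheses (HV_pd : hermitian_pd HV) (HW_pd : hermitian_pd HW).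
Hypotheses (v_neq0 : v != 0) (w_neq0 : w != 0).

Definition orbit_ratio s :=
  herm_norm HW (rhoW s *m w) ^+ 2 / herm_norm HV (rhoV s *m v) ^+ 2.

Local Notation ratio_inf := (inf [set orbit_ratio s | s in G]).
Local Notation closure_vw := (fs_closure HV HW (orbit_pt G rhoV rhoW v w)).
Local Notation closure_v0 := (fs_closure HV HW (orbit_pt G rhoV rhoW v 0)).

Lemma orbit_v_neq0 s : G s -> rhoV s *m v != 0.
Proof. by move=> Gs; apply: rational_rep_mx_neq0 G_classical rhoV_rep Gs v_neq0. Qed.

Lemma orbit_w_neq0 s : G s -> rhoW s *m w != 0.
Proof. by move=> Gs; apply: rational_rep_mx_neq0 G_classical rhoW_rep Gs w_neq0. Qed.

Lemma orbit_pt_nonzero w' x : orbit_pt G rhoV rhoW v w' x -> nonzero_vec x.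
Proof. by move=> [s Gs <-]; left; apply: orbit_v_neq0. Qed.

Lemma orbit_ratio_gt0 s : G s -> 0 < orbit_ratio s.
Proof.
by move=> Gs; rewrite divr_gt0 ?exprn_gt0 ?herm_norm_gt0 ?orbit_v_neq0 ?orbit_w_neq0.
Qed.

Lemma p_vw_orbit_ratio s : G s -> p_vw HV HW rhoV rhoW v w s = ln (orbit_ratio s).
Proof.
move=> Gs; have V_gt0 := herm_norm_gt0 HV_pd (orbit_v_neq0 Gs).
have W_gt0 := herm_norm_gt0 HW_pd (orbit_w_neq0 Gs).
by rewrite /orbit_ratio lnM ?lnV ?posrE ?invr_gt0 ?exprn_gt0.
Qed.

Lemma orbit_ratios_neq0 : [set orbit_ratio s | s in G] !=set0.
Proof. by exists (orbit_ratio 1%:M), 1%:M => //; apply: classical_group1. Qed.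

Lemma orbit_ratio_inf_le s : G s -> ratio_inf <= orbit_ratio s.
Proof.
move=> Gs; apply: ge_inf; last by exists s.
by exists 0 => _ [s' Gs' <-]; apply/ltW; apply: orbit_ratio_gt0.
Qed.

Lemma orbit_ratio_inf_ge0 : 0 <= ratio_inf.
Proof.
by apply: lb_le_inf orbit_ratios_neq0 _ => _ [s Gs <-]; apply/ltW; apply: orbit_ratio_gt0.
Qed.

Lemma fs_angle_orbit s :
  G s -> fs_angle HV HW (rhoV s *m v, rhoW s *m w) = atan (Num.sqrt (orbit_ratio s)).
Proof.
move=> Gs; rewrite fs_angle_atan ?orbit_v_neq0 //= /orbit_ratio -expr_div_n.
by rewrite sqrtr_sqr ger0_norm // divr_ge0 ?herm_norm_ge0.
Qed.

Lemma fs_angle_closure_vw x :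
  closure_vw x -> atan (Num.sqrt ratio_inf) <= fs_angle HV HW x.
Proof.
apply: (fs_angle_closure_ge HV_pd HW_pd) => z z_orb.
split; first exact: orbit_pt_nonzero z_orb.
case: z_orb => s Gs <-.
rewrite fs_angle_orbit // le_atan // ler_sqrt ?orbit_ratio_inf_le //.
exact/ltW/orbit_ratio_gt0.
Qed.

Lemma fs_angle_closure_v0 y : closure_v0 y -> fs_angle HV HW y <= 0.
Proof.
apply: (fs_angle_closure_le HV_pd HW_pd) => z z_orb.
split; first exact: orbit_pt_nonzero z_orb.
case: z_orb => s Gs <-.
by rewrite mulmx0 fs_angle_pr1 ?orbit_v_neq0.
Qed.

Lemma fs_dist_orbit_closures_ge x y : closure_vw x -> closure_v0 y ->
  atan (Num.sqrt ratio_inf) <= fs_dist HV HW x y.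
Proof.
move=> x_cl y_cl; have := fs_angle_lipschitz HV_pd HW_pd x_cl.1 y_cl.1.
rewrite ler_norml => /andP[_].
by have := fs_angle_closure_vw x_cl; have := fs_angle_closure_v0 y_cl; lra.
Qed.

Lemma fs_dist_orbit_closures_attained s : G s ->
  [set fs_dist HV HW x y | x in closure_vw & y in closure_v0]
    (atan (Num.sqrt (orbit_ratio s))).
Proof.
move=> Gs.
exists (rhoV s *m v, rhoW s *m w).
  by apply: (subset_fs_closure HV_pd HW_pd (@orbit_pt_nonzero _)); exists s.
exists (rhoV s *m v, rhoW s *m 0).
  by apply: (subset_fs_closure HV_pd HW_pd (@orbit_pt_nonzero _)); exists s.
rewrite mulmx0 (fs_dist_pr1 HV_pd HW_pd (x := (_, rhoW s *m w))) ?orbit_v_neq0 //.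
exact: fs_angle_orbit.
Qed.

Lemma tan_fs_set_dist_orbit_closures :
  tan (fs_set_dist HV HW closure_vw closure_v0) ^+ 2 = ratio_inf.
Proof.
set D := fs_set_dist _ _ _ _.
have D_ge : atan (Num.sqrt ratio_inf) <= D.
  apply: lb_le_inf.
    by eexists; apply: fs_dist_orbit_closures_attained (classical_group1 G_classical).
  by move=> _ [x x_cl [y y_cl <-]]; apply: fs_dist_orbit_closures_ge.
have D_le s : G s -> D <= atan (Num.sqrt (orbit_ratio s)).
  move=> Gs; apply: ge_inf; last exact: fs_dist_orbit_closures_attained.
  exists (atan (Num.sqrt ratio_inf)) => _ [x x_cl [y y_cl <-]].
  exact: fs_dist_orbit_closures_ge.
have D_itv : D \in `](- (pi / 2)), (pi / 2)[%R.
  rewrite in_itv /= (lt_le_trans (atan_gtNpi2 _) D_ge).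
  exact: le_lt_trans (D_le _ (classical_group1 G_classical)) (atan_ltpi2 _).
have atan_mono : {mono @atan R : x y / x <= y} := le_mono (@lt_atan R).
have D_atan : atan (tan D) = D := tanK D_itv.
have sqrt_inf_le : Num.sqrt ratio_inf <= tan D by rewrite -atan_mono D_atan.
have le_sqrt_ratio s : G s -> tan D <= Num.sqrt (orbit_ratio s).
  by move=> Gs; rewrite -atan_mono D_atan D_le.
have tanD_ge0 : 0 <= tan D := le_trans (sqrtr_ge0 _) sqrt_inf_le.
apply/le_anti/andP; split.
- apply: lb_le_inf orbit_ratios_neq0 _ => _ [s Gs <-].
  rewrite -(sqr_sqrtr (ltW (orbit_ratio_gt0 Gs))) ler_pXn2r ?nnegrE ?sqrtr_ge0 //.
  exact: le_sqrt_ratio.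
- rewrite -[X in X <= _](sqr_sqrtr orbit_ratio_inf_ge0).
  by rewrite ler_pXn2r ?nnegrE ?sqrtr_ge0.
Qed.

End OrbitClosures.

Theorem corollary4p4 (R : realType) (N a b : nat) (G : set 'M[R[i]]_N.+1)
  (rhoV : 'M[R[i]]_N.+1 -> 'M[R[i]]_a) (rhoW : 'M[R[i]]_N.+1 -> 'M[R[i]]_b)
  (HV : 'M[R[i]]_a) (HW : 'M[R[i]]_b) (v : 'cV[R[i]]_a) (w : 'cV[R[i]]_b) :
  classical_group G ->
  rational_rep G rhoV -> rational_rep G rhoW ->
  hermitian_pd HV -> hermitian_pd HW ->
  v != 0 -> w != 0 ->
  ereal_inf [set (p_vw HV HW rhoV rhoW v w s)%:E | s in G] =
  elog (tan (fs_set_dist HV HW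
               (fs_closure HV HW (orbit_pt G rhoV rhoW v w))
               (fs_closure HV HW (orbit_pt G rhoV rhoW v 0))) ^+ 2).
Proof.
move=> G_classical rhoV_rep rhoW_rep HV_pd HW_pd v_neq0 w_neq0.
rewrite tan_fs_set_dist_orbit_closures // -ereal_inf_ln.
- congr ereal_inf; rewrite image_comp; apply: eq_imagel => s Gs.
  by rewrite /= (p_vw_orbit_ratio G_classical).
- exact: orbit_ratios_neq0.
- by move=> _ [s Gs <-]; apply: (orbit_ratio_gt0 G_classical).
Qed.
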